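(* Let $k$ be a commutative ring, $P,P'$ invertible $k$-modules, $Q'=P'^*$. Let $A$ be a $P$-Frobenius $k$-algebra and $B$ a $P'$-Frobenius $k$-algebra such that $B$ is a subalgebra of $A$, $A_B$ is a finitely generated projective right $B$-module, and some Nakayama automorphism $\nu_A$ of $A$ satisfies $\nu_A(B)=B$. Let $\nu_B$ be a Nakayama automorphism of $B$ and $\beta=\nu_B\circ\nu_A^{-1}$ (restricted to $B$). Then $A$ is a $W$-Frobenius extension of $B$, where $W={}_\beta B\otimes_kQ'\otimes_kP$.
   Context: For an invertible (finitely generated projective rank-one) $k$-module $P$, a $k$-algebra $A$ is $P$-Frobenius if it is finitely generated projective over $k$ and $A_A\cong\mathrm{Hom}_k(A,P)_A$ as right $A$-modules, where $\mathrm{Hom}_k(A,P)$ is an $A$-bimodule via $(bfc)(a)=f(cab)$. A Frobenius homomorphism is $\phi\in\mathrm{Hom}_k(A,P)$ such that $a\mapsto\phi a$ is such an isomorphism; its Nakayama automorphism is the algebra automorphism $\nu$ with $a\phi=\phi\nu(a)$, i.e. $\phi(xa)=\phi(\nu(a)x)$ for all $a,x$; a Nakayama automorphism of $A$ is one arising from some Frobenius homomorphism. ${}_\beta B$ denotes $B$ with right regular action and left action $b\cdot x=\beta(b)x$; $W$ is a $B$-bimodule via its first factor. For a subring $B\subseteq A$ and an invertible $B$-bimodule $W$, $A$ is a $W$-Frobenius extension of $B$ if $A_B$ is finitely generated projective and ${}_BA_A\cong{}_B\mathrm{Hom}_B(A_B,W_B)_A$, where $(bfa)(x)=bf(ax)$.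 *)

From HB Require Import structures.
From mathcomp Require Import all_boot all_order all_algebra.
Set Implicit Arguments. Unset Strict Implicit. Unset Printing Implicit Defensive.
Import GRing.Theory.
Local Open Scope ring_scope.

Section Frobenius.
Variable k : comPzRingType.

Definition klin (M N : lmodType k) (f : M -> N) : Prop :=
  forall (r : k) (u v : M), f (r *: u + v) = r *: f u + f v.

Definition kbilin (M N X : lmodType k) (g : M -> N -> X) : Prop :=
  (forall m, klin (g m)) /\ (forall n, klin (fun m => g m n)).

Definition ktrilin (M N O X : lmodType k) (g : M -> N -> O -> X) : Prop :=
  (forall n o, klin (fun m => g m n o)) /\
  (forall m o, klin (fun n => g m n o)) /\
  (forall m n, klin (g m n)).

Definition is_tensor2 (M N T : lmodType k) (t : M -> N -> T) : Prop :=
  kbilin t /\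
  forall (X : lmodType k) (g : M -> N -> X), kbilin g ->
    (exists h : T -> X, klin h /\ forall m n, h (t m n) = g m n) /\
    (forall h h' : T -> X, klin h -> klin h' ->
       (forall m n, h (t m n) = g m n) -> (forall m n, h' (t m n) = g m n) ->
       forall x, h x = h' x).

Definition is_tensor3 (M N O T : lmodType k) (t : M -> N -> O -> T) : Prop :=
  ktrilin t /\
  forall (X : lmodType k) (g : M -> N -> O -> X), ktrilin g ->
    (exists h : T -> X, klin h /\ forall m n o, h (t m n o) = g m n o) /\
    (forall h h' : T -> X, klin h -> klin h' ->
       (forall m n o, h (t m n o) = g m n o) ->
       (forall m n o, h' (t m n o) = g m n o) ->
       forall x, h x = h' x).

(* P is an invertible k-module: P (x)_k Q ~= k for some k-module Q,
   i.e. some bilinear pairing P x Q -> k is a universal bilinear map. *)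
Definition invertible_kmod (P : lmodType k) : Prop :=
  exists (Q : lmodType k) (m : P -> Q -> k^o), is_tensor2 m.

Definition is_dual (P Q : lmodType k) (ev : Q -> P -> k^o) : Prop :=
  kbilin ev /\
  (forall q q', (forall p, ev q p = ev q' p) -> q = q') /\
  (forall f : P -> k^o, klin f -> exists q, forall p, f p = ev q p).

(* finitely generated projective k-module: a direct summand of k^n. *)
Definition fgproj_k (M : lmodType k) : Prop :=
  exists (n : nat) (e : M -> 'I_n -> k) (g : ('I_n -> k) -> M),
    (forall r u v i, e (r *: u + v) i = r * e u i + e v i) /\
    (forall r u v, g (fun i => r * u i + v i) = r *: g u + g v) /\
    (forall m, g (e m) = m).

Definition kalg_mor (A B : algType k) (f : A -> B) : Prop :=
  klin f /\ (forall x y, f (x * y) = f x * f y) /\ f 1 = 1.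

Definition kalg_aut (A : algType k) (f : A -> A) : Prop :=
  kalg_mor f /\ bijective f.

(* A is P-Frobenius: A f.g. projective over k and A_A ~= Hom_k(A,P)_A,
   where (f c)(x) = f (c x). *)
Definition P_Frobenius (A : algType k) (P : lmodType k) : Prop :=
  fgproj_k A /\
  exists Phi : A -> A -> P,
    (forall a, klin (Phi a)) /\
    (forall a a' x, Phi (a + a') x = Phi a x + Phi a' x) /\
    (forall a c x, Phi (a * c) x = Phi a (c * x)) /\
    (forall a a', (forall x, Phi a x = Phi a' x) -> a = a') /\
    (forall f : A -> P, klin f -> exists a, forall x, f x = Phi a x).

(* Frobenius homomorphism: a |-> phi a (with (phi a)(x) = phi (a x))
   is an isomorphism A -> Hom_k(A,P). *)
Definition frob_hom (A : algType k) (P : lmodType k) (phi : A -> P) : Prop :=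
  klin phi /\
  (forall a a', (forall x, phi (a * x) = phi (a' * x)) -> a = a') /\
  (forall f : A -> P, klin f -> exists a, forall x, f x = phi (a * x)).

Definition nakayama_of (A : algType k) (P : lmodType k) (phi : A -> P)
  (nu : A -> A) : Prop :=
  kalg_aut nu /\ forall a x, phi (x * a) = phi (nu a * x).

Definition nakayama_aut (A : algType k) (P : lmodType k) (nu : A -> A) : Prop :=
  exists phi : A -> P, frob_hom phi /\ nakayama_of phi nu.

(* Given an injective algebra map iota : B -> A (B a subalgebra of A),
   A_B is a finitely generated projective right B-module: a direct summand
   of B^n as right B-modules. *)
Definition fgproj_right (B A : algType k) (iota : B -> A) : Prop :=
  exists (n : nat) (e : A -> 'I_n -> B) (g : ('I_n -> B) -> A),
    (forall u v i, e (u + v) i = e u i + e v i) /\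
    (forall u b i, e (u * iota b) i = e u i * b) /\
    (forall u v, g (fun i => u i + v i) = g u + g v) /\
    (forall u b, g (fun i => u i * b) = g u * iota b) /\
    (forall a, g (e a) = a).

(* A is a W-Frobenius extension of B (via iota : B -> A), where W is a
   B-bimodule with left action lW and right action rW:
   A_B f.g. projective and  B A_A ~= B Hom_B(A_B, W_B)_A,
   with (b f a)(x) = b . f (a x). *)
Definition W_Frobenius_ext (B A : algType k) (iota : B -> A) (W : lmodType k)
  (lW : B -> W -> W) (rW : W -> B -> W) : Prop :=
  fgproj_right iota /\
  exists Psi : A -> A -> W,
    (forall a x y, Psi a (x + y) = Psi a x + Psi a y) /\
    (forall a x b, Psi a (x * iota b) = rW (Psi a x) b) /\
    (forall a a' x, Psi (a + a') x = Psi a x + Psi a' x) /\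
    (forall b a x, Psi (iota b * a) x = lW b (Psi a x)) /\
    (forall a c x, Psi (a * c) x = Psi a (c * x)) /\
    (forall a a', (forall x, Psi a x = Psi a' x) -> a = a') /\
    (forall f : A -> W, (forall x y, f (x + y) = f x + f y) ->
       (forall x b, f (x * iota b) = rW (f x) b) ->
       exists a, forall x, f x = Psi a x).

End Frobenius.

From HB Require Import structures.
From mathcomp Require Import all_boot all_order all_algebra.
From mathcomp Require Import boolp functions.
Set Implicit Arguments. Unset Strict Implicit. Unset Printing Implicit Defensive.
Import GRing.Theory.
Local Open Scope ring_scope.

(* For a Frobenius homomorphism phi_B of B, the map
   mu (x (x) q (x) p) = q (phi_B x) p  turns  w |-> (c |-> mu (w c))  into an
   isomorphism of right B-modules W ~= Hom_k(B, P).  Its inverse is written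
   down with a dual basis of B over k, the elements of B that phi_B sends to
   the coordinate functionals, and a decomposition 1 = sum_j q_j (p_j) of the
   evaluation P' (x) P'^* ~= k; since End_k(P') = k it collapses on pure
   tensors.  Through this isomorphism the beta-twisted left action becomes
   precomposition with nu_A^-1, so Hom_B(A, W) ~= Hom_k(A, P), and this is
   identified with A by phi_A, the Nakayama relation of nu_A matching the
   two left B-actions. *)

Section LinearMaps.
Variables (k : comPzRingType) (M N : lmodType k) (f : M -> N).
Hypothesis f_lin : klin f.

Lemma klinD x y : f (x + y) = f x + f y.
Proof. by have := f_lin 1 x y; rewrite !scale1r. Qed.

Lemma klin0 : f 0 = 0.
Proof. by apply: (addrI (f 0)); rewrite -klinD !addr0. Qed.

Lemma klinZ r x : f (r *: x) = r *: f x.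
Proof. by have := f_lin r x 0; rewrite !addr0 klin0 addr0. Qed.

Lemma klinB x y : f (x - y) = f x - f y.
Proof. by rewrite klinD -scaleN1r klinZ scaleN1r. Qed.

Lemma klin_sum (I : Type) (s : seq I) (F : I -> M) :
  f (\sum_(i <- s) F i) = \sum_(i <- s) f (F i).
Proof. exact: (big_morph f klinD klin0). Qed.

End LinearMaps.

Section AdditiveMaps.
Variables (X Y : zmodType) (F : X -> Y).
Hypothesis F_add : {morph F : x y / x + y}.

Lemma addmorph0 : F 0 = 0.
Proof. by apply: (addrI (F 0)); rewrite -F_add !addr0. Qed.

Lemma addmorph_sum (I : Type) (s : seq I) (G : I -> X) :
  F (\sum_(i <- s) G i) = \sum_(i <- s) F (G i).
Proof. exact: (big_morph F F_add addmorph0). Qed.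

End AdditiveMaps.

Record submodule (k : comPzRingType) (T : lmodType k) := Submodule {
  submod_mem :> T -> Prop;
  submod0 : submod_mem 0;
  submodD : forall x y, submod_mem x -> submod_mem y -> submod_mem (x + y);
  submodZ : forall (r : k) x, submod_mem x -> submod_mem (r *: x) }.

Section SubmoduleType.
Variables (k : comPzRingType) (T : lmodType k) (S : submodule T).

Definition submod_pred : {pred T} := fun x => `[< S x >].

Fact submod_pred_closed : subsemimod_closed submod_pred.
Proof.
split; first split.
- exact/asboolP/submod0.
- by move=> x y /asboolP Sx /asboolP Sy; apply/asboolP/submodD.
- by move=> r x /asboolP Sx; apply/asboolP/submodZ.
Qed.

HB.instance Definition _ :=
  GRing.isSubmodClosed.Build k T submod_pred submod_pred_closed.

Record submod_type := SubmodElt { submod_val :> T; _ : submod_val \in submod_pred }.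
HB.instance Definition _ := [isSub for submod_val].
HB.instance Definition _ := [Choice of submod_type by <:].
HB.instance Definition _ := [SubChoice_isSubLmodule of submod_type by <:].

Lemma submod_valP (x : submod_type) : S (val x).
Proof. by case: x => x Sx; apply/asboolP. Qed.

Definition submod_elt (x : T) (Sx : S x) : submod_type := Sub x (asboolT Sx).

End SubmoduleType.

Section FiniteSums.
Variables (k : comPzRingType) (T : lmodType k) (I : Type) (f : I -> T).

Definition finsums (w : T) : Prop := exists s : seq I, w = \sum_(i <- s) f i.

Hypothesis f_scale : forall (r : k) i, exists j, r *: f i = f j.

Lemma finsums0 : finsums 0.
Proof. by exists [::]; rewrite big_nil. Qed.

Lemma finsumsD x y : finsums x -> finsums y -> finsums (x + y).
Proof. by move=> [s ->] [s' ->]; exists (s ++ s'); rewrite big_cat. Qed.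

Lemma finsumsZ r x : finsums x -> finsums (r *: x).
Proof.
move=> [s ->]; have /choice[j fj] := f_scale r.
by exists (map j s); rewrite big_map scaler_sumr; apply: eq_bigr => i _; apply: fj.
Qed.

Definition finsums_submodule := Submodule finsums0 finsumsD finsumsZ.

Lemma finsums_ind (Pr : T -> Prop) :
  Pr 0 -> (forall x y, Pr x -> Pr y -> Pr (x + y)) -> (forall i, Pr (f i)) ->
  forall w, finsums w -> Pr w.
Proof.
move=> P0 PD Pf _ [s ->]; elim: s => [|i s IH]; first by rewrite big_nil.
by rewrite big_cons; apply: PD.
Qed.

End FiniteSums.

Section TensorSpan.
Variables (k : comPzRingType) (M N O T : lmodType k).

(* Corestricting t to the span of the pure tensors and composing back with val
   gives a linear endomorphism that agrees with the identity on pure tensors. *)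
Lemma tensor2_spanned (t : M -> N -> T) : is_tensor2 t ->
  forall w, finsums (fun u : M * N => t u.1 u.2) w.
Proof.
move=> [t_lin U] w; have [t1 t2] := t_lin.
have tZ r (u : M * N) : exists v : M * N, r *: t u.1 u.2 = t v.1 v.2.
  by exists (u.1, r *: u.2); rewrite /= (klinZ (t1 _)).
pose S := finsums_submodule tZ.
have St m n : S (t m n) by exists [:: (m, n)]; rewrite big_seq1.
pose tS m n := submod_elt (St m n).
have tS_lin : kbilin tS.
  by split=> [m|n] r u v; apply: val_inj; rewrite /= ?t1 ?t2.
have [[h [h_lin htS]] _] := U _ tS tS_lin.
have [_ t_uniq] := U _ t t_lin.
suff <- : val (h w) = w by exact: (submod_valP (h w)).
apply: (t_uniq (val \o h) id) => //= [r u v|m n]; last by rewrite htS.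
by rewrite /= h_lin.
Qed.

Lemma tensor3_spanned (t : M -> N -> O -> T) : is_tensor3 t ->
  forall w, finsums (fun u : M * N * O => t u.1.1 u.1.2 u.2) w.
Proof.
move=> [t_lin U] w; have [t1 [t2 t3]] := t_lin.
have tZ r (u : M * N * O) : exists v : M * N * O,
    r *: t u.1.1 u.1.2 u.2 = t v.1.1 v.1.2 v.2.
  by exists (r *: u.1.1, u.1.2, u.2); rewrite /= (klinZ (t1 _ _)).
pose S := finsums_submodule tZ.
have St m n o : S (t m n o) by exists [:: (m, n, o)]; rewrite big_seq1.
pose tS m n o := submod_elt (St m n o).
have tS_lin : ktrilin tS.
  by split; [|split] => [n o|m o|m n] r u v; apply: val_inj; rewrite /= ?t1 ?t2 ?t3.
have [[h [h_lin htS]] _] := U _ tS tS_lin.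
have [_ t_uniq] := U _ t t_lin.
suff <- : val (h w) = w by exact: (submod_valP (h w)).
apply: (t_uniq (val \o h) id) => //= [r u v|m n o]; last by rewrite htS.
by rewrite /= h_lin.
Qed.

Lemma tensor3_additive_ext (t : M -> N -> O -> T) : is_tensor3 t ->
  forall (X : zmodType) (F G : T -> X),
  {morph F : x y / x + y} -> {morph G : x y / x + y} ->
  (forall m n o, F (t m n o) = G (t m n o)) -> forall w, F w = G w.
Proof.
move=> t_tensor X F G F_add G_add FG w.
move: (tensor3_spanned t_tensor w).
apply: (finsums_ind (Pr := fun w => F w = G w)) => [|x y Fx Fy|u].
- by rewrite !addmorph0.
- by rewrite F_add G_add Fx Fy.
- exact: FG.
Qed.

End TensorSpan.

Section UnitTensor.
Variables (k : comPzRingType) (P Q : lmodType k) (m : P -> Q -> k^o).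
Hypothesis m_tensor : is_tensor2 m.

Lemma unit_tensor_bilinE (X : lmodType k) (g : P -> Q -> X) :
  kbilin g -> exists x0, forall p z, g p z = m p z *: x0.
Proof.
move=> g_lin; have [[h [h_lin hm]] _] := m_tensor.2 X g g_lin.
by exists (h 1) => p z; rewrite -hm -(klinZ h_lin) [_ *: _]mulr1.
Qed.

Lemma unit_tensor_one : exists s : seq (P * Q), \sum_(u <- s) m u.1 u.2 = 1.
Proof. by have [s s1] := tensor2_spanned m_tensor 1; exists s. Qed.

Lemma unit_tensor_nondeg y : (forall z, m y z = 0) -> y = 0.
Proof.
move=> y0; have [s s1] := unit_tensor_one; have [[m1 m2] _] := m_tensor.
rewrite -[y]scale1r -s1 scaler_suml big1 // => u _.
have g_lin : kbilin (fun (p : P) z => m u.1 z *: p).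
  split=> [p|z] r a b /=; first by rewrite (klinD (m1 _)) (klinZ (m1 _)) scalerDl scalerA.
  by rewrite scalerDr !scalerA mulrC.
by have [x0 ->] := unit_tensor_bilinE g_lin; rewrite y0 scale0r.
Qed.

Lemma unit_tensor_endo_scalar (rho : P -> P) :
  klin rho -> exists s : k, forall p, rho p = s *: p.
Proof.
move=> rho_lin; have [[m1 m2] _] := m_tensor.
have g_lin : kbilin (fun p z => m (rho p) z).
  split=> [p|z] r a b /=; first exact: m1.
  by rewrite (klinD rho_lin) (klinZ rho_lin); apply: m2.
have [s ms] := unit_tensor_bilinE g_lin.
exists s => p; apply/eqP; rewrite -subr_eq0; apply/eqP.
apply: unit_tensor_nondeg => z.
by rewrite (klinB (m2 z)) ms (klinZ (m2 z)) [_ *: s]mulrC subrr.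
Qed.

End UnitTensor.

Lemma invertible_endo_scalar (k : comPzRingType) (P : lmodType k) (rho : P -> P) :
  invertible_kmod P -> klin rho -> exists s : k, forall p, rho p = s *: p.
Proof. by move=> [Q [m m_tensor]]; apply: (unit_tensor_endo_scalar m_tensor). Qed.

Section DualOfInvertible.
Variables (k : comPzRingType) (P Q : lmodType k) (ev : Q -> P -> k^o).
Hypothesis ev_dual : is_dual ev.

Lemma dual_pairing_one : invertible_kmod P ->
  exists J : seq (P * Q), \sum_(j <- J) ev j.2 j.1 = 1.
Proof.
move=> [Q0 [m m_tensor]]; have [s s1] := unit_tensor_one m_tensor.
have [[_ m2] _] := m_tensor; have [_ [_ ev_onto]] := ev_dual.
have /choice[q qE] : forall z : Q0, exists q, forall p, m p z = ev q p.
  by move=> z; apply: ev_onto; apply: m2.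
by exists [seq (u.1, q u.2) | u <- s]; rewrite big_map -s1; apply: eq_bigr => u _.
Qed.

Variable J : seq (P * Q).
Hypothesis J1 : \sum_(j <- J) ev j.2 j.1 = 1.

Lemma dual_expansion (q : Q) (s : P -> k) :
  (forall p x, ev q x *: p = s p *: x) -> \sum_(j <- J) s j.1 *: j.2 = q.
Proof.
move=> qs; have [[ev1 ev2] [ev_inj _]] := ev_dual.
apply: ev_inj => x; rewrite (klin_sum (ev2 x)) -[RHS]mulr1 -J1 mulr_sumr.
apply: eq_bigr => j _.
by rewrite (klinZ (ev2 x)) -(klinZ (ev1 _)) -qs (klinZ (ev1 _)).
Qed.

End DualOfInvertible.

Lemma fgproj_decomp (k : comPzRingType) (M : lmodType k) n
    (e : M -> 'I_n -> k) (g : ('I_n -> k) -> M) :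
  (forall r u v, g (fun i => r * u i + v i) = r *: g u + g v) ->
  (forall x, g (e x) = x) ->
  forall x, x = \sum_(i < n) e x i *: g (fun j => (i == j)%:R).
Proof.
move=> g_lin ge x; have g_klin : klin (g : ('I_n -> k^o) -> M) := g_lin.
under eq_bigr => i _ do rewrite -(klinZ g_klin).
rewrite -(klin_sum g_klin) -{1}(ge x); congr g; apply/funext => j.
rewrite fct_sumE (bigD1 j) //= big1 => [|i /negbTE ij].
  by rewrite scalrfctE /= eqxx [_ *: _]mulr1 addr0.
by rewrite scalrfctE /= ij [_ *: _]mulr0.
Qed.

Lemma frob_hom_dual_elements (k : comPzRingType) (A : algType k) (P : lmodType k)
    (phi : A -> P) n (e : A -> 'I_n -> k) :
  frob_hom phi -> (forall i, klin (fun x => e x i : k^o)) ->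
  exists X : 'I_n -> P -> A, forall i p y, phi (X i p * y) = e y i *: p.
Proof.
move=> [_ [_ phi_onto]] e_lin.
have /choice[X hX] : forall ip : 'I_n * P,
    exists x, forall y, e y ip.1 *: ip.2 = phi (x * y).
  by move=> [i p]; apply: phi_onto => r u v /=; rewrite e_lin scalerDl scalerA.
by exists (fun i p => X (i, p)) => i p y; rewrite (hX (i, p)).
Qed.

Section TwistedTensor.
Variables (k : comPzRingType) (B : algType k) (P P' Q' W : lmodType k).
Variables (ev : Q' -> P' -> k^o) (phB : B -> P') (t : B -> Q' -> P -> W).
Variables (rW : W -> B -> W) (mu : W -> P).
Hypotheses (ev_dual : is_dual ev) (P'_inv : invertible_kmod P').
Hypotheses (phB_frob : frob_hom phB) (t_tensor : is_tensor3 t).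
Hypothesis rW_add : forall b, {morph rW ^~ b : x y / x + y}.
Hypothesis rWt : forall b x q p, rW (t x q p) b = t (x * b) q p.
Hypothesis mu_lin : klin mu.
Hypothesis muE : forall x q p, mu (t x q p) = ev q (phB x) *: p.
Variables (nuB beta : B -> B) (lW : B -> W -> W).
Hypothesis phB_nak : forall a x, phB (x * a) = phB (nuB a * x).
Hypothesis lW_add : forall b, {morph lW b : x y / x + y}.
Hypothesis lWt : forall b x q p, lW b (t x q p) = t (beta b * x) q p.

Lemma ev_phB_trilin : ktrilin (fun x q (p : P) => ev q (phB x) *: p).
Proof.
have [[ev1 ev2] _] := ev_dual; have phB_lin := phB_frob.1.
split; [|split] => [q p|x p|x q] r u v /=.
- rewrite (klinD phB_lin) (klinZ phB_lin) (klinD (ev1 q)) (klinZ (ev1 q)).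
  by rewrite scalerDl scalerA.
- by rewrite (klinD (ev2 _)) (klinZ (ev2 _)) scalerDl scalerA.
- by rewrite scalerDr !scalerA mulrC.
Qed.

Lemma rWA b c w : rW (rW w b) c = rW w (b * c).
Proof.
move: w; apply: (tensor3_additive_ext t_tensor
  (F := fun w => rW (rW w b) c) (G := fun w => rW w (b * c))) => [x y|x y|x q p].
- by rewrite !rW_add.
- by rewrite rW_add.
- by rewrite !rWt mulrA.
Qed.

Lemma rW_scale (r : k) w : rW w r%:A = r *: w.
Proof.
have t1 := t_tensor.1.1.
move: w; apply: (tensor3_additive_ext t_tensor
  (F := fun w => rW w r%:A) (G := fun w => r *: w)) => [x y|x y|x q p].
- by rewrite rW_add.
- by rewrite scalerDr.
- by rewrite rWt -scalerAr mulr1 (klinZ (t1 _ _)).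
Qed.

Lemma mu_rW_lW b b0 : beta b = nuB b0 ->
  forall c w, mu (rW (lW b w) c) = mu (rW w (c * b0)).
Proof.
move=> bb0 c; apply: (tensor3_additive_ext t_tensor
  (F := fun w => mu (rW (lW b w) c)) (G := fun w => mu (rW w (c * b0)))).
- by move=> x y; rewrite lW_add rW_add (klinD mu_lin).
- by move=> x y; rewrite rW_add (klinD mu_lin).
- by move=> x q p; rewrite lWt !rWt !muE bb0 -mulrA -phB_nak !mulrA.
Qed.

Variables (n : nat) (e : B -> 'I_n -> k) (basis : 'I_n -> B).
Hypothesis e_lin : forall i, klin (fun x => e x i : k^o).
Hypothesis e_decomp : forall x, x = \sum_(i < n) e x i *: basis i.
Variables (X : 'I_n -> P' -> B) (J : seq (P' * Q')).
Hypothesis X_dual : forall i p y, phB (X i p * y) = e y i *: p.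
Hypothesis J1 : \sum_(j <- J) ev j.2 j.1 = 1.

Definition W_of_hom (G : B -> P) : W :=
  \sum_(i < n) \sum_(j <- J) t (X i j.1) j.2 (G (basis i)).

Lemma mu_rW_W_of_hom G : klin G -> forall c, mu (rW (W_of_hom G) c) = G c.
Proof.
move=> G_lin c; have [[ev1 _] _] := ev_dual.
rewrite (addmorph_sum (rW_add c)) (klin_sum mu_lin) {2}(e_decomp c).
rewrite (klin_sum G_lin); apply: eq_bigr => i _.
rewrite (addmorph_sum (rW_add c)) (klin_sum mu_lin) (klinZ G_lin).
rewrite -[in RHS](scale1r (G _)) -J1 scaler_suml scaler_sumr.
by apply: eq_bigr => j _; rewrite rWt muE X_dual (klinZ (ev1 _)) scalerA.
Qed.

Lemma dual_elements_sum x (q : Q') (p : P') (s : k) :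
  (forall y, ev q y *: p = s *: y) ->
  \sum_(i < n) ev q (phB (x * basis i)) *: X i p = s *: x.
Proof.
move=> qs; have [phB_lin [phB_inj _]] := phB_frob; have [[ev1 _] _] := ev_dual.
apply: phB_inj => y; rewrite mulr_suml (klin_sum phB_lin) -scalerAl.
rewrite (klinZ phB_lin) -qs {2}(e_decomp y) mulr_sumr (klin_sum phB_lin).
rewrite (klin_sum (ev1 q)) scaler_suml; apply: eq_bigr => i _.
rewrite -scalerAl (klinZ phB_lin) X_dual scalerA -scalerAr (klinZ phB_lin).
by rewrite (klinZ (ev1 q)) [_ * _]mulrC.
Qed.

Lemma W_of_hom_mu_rW w : W_of_hom (fun c => mu (rW w c)) = w.
Proof.
have [t1 [t2 t3]] := t_tensor.1; have [[ev1 _] _] := ev_dual.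
move: w; apply: (tensor3_additive_ext t_tensor
  (F := fun w => W_of_hom (fun c => mu (rW w c))) (G := id)) => // [w1 w2|x q p] /=.
  rewrite /W_of_hom -big_split; apply: eq_bigr => i _ /=.
  rewrite -big_split; apply: eq_bigr => j _ /=.
  by rewrite rW_add (klinD mu_lin) (klinD (t3 _ _)).
have /choice[s qs] : forall p' : P', exists s : k, forall y, ev q y *: p' = s *: y.
  move=> p'; apply: invertible_endo_scalar P'_inv _ => r u v.
  by rewrite (klinD (ev1 q)) (klinZ (ev1 q)) scalerDl scalerA.
rewrite /W_of_hom exchange_big /= -[in RHS](dual_expansion ev_dual J1 qs).
rewrite (klin_sum (t2 x p)); apply: eq_bigr => j _.
under eq_bigr => i _ do rewrite rWt muE (klinZ (t3 _ _)) -(klinZ (t1 _ _)).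
rewrite -(klin_sum (t1 _ _)) (dual_elements_sum x (qs j.1)).
by rewrite (klinZ (t1 _ _)) (klinZ (t2 _ _)).
Qed.

Lemma mu_rW_inj w w' : (forall c, mu (rW w c) = mu (rW w' c)) -> w = w'.
Proof.
move=> ww'; rewrite -(W_of_hom_mu_rW w) -(W_of_hom_mu_rW w').
by congr W_of_hom; apply: funext.
Qed.

End TwistedTensor.

Section FrobeniusExtension.
Variables (k : comPzRingType) (A B : algType k) (iota : B -> A).
Variables (P W : lmodType k) (phA : A -> P) (nuA : A -> A).
Variables (lW : B -> W -> W) (rW : W -> B -> W) (mu : W -> P).
Hypotheses (iota_mor : kalg_mor iota) (phA_frob : frob_hom phA).
Hypothesis phA_nak : forall a x, phA (x * a) = phA (nuA a * x).
Hypothesis mu_lin : klin mu.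
Hypothesis rW_add : forall b, {morph rW ^~ b : x y / x + y}.
Hypothesis rWM : forall b c w, rW (rW w b) c = rW w (b * c).
Hypothesis rWZ : forall (r : k) w, rW w r%:A = r *: w.
Hypothesis rep_inj : forall w w', (forall c, mu (rW w c) = mu (rW w' c)) -> w = w'.
Hypothesis rep_onto : forall G, klin G -> exists w, forall c, mu (rW w c) = G c.
Hypothesis nuA_onto : forall b, exists b0, nuA (iota b0) = iota b.
Hypothesis lW_twist : forall b b0, nuA (iota b0) = iota b ->
  forall c w, mu (rW (lW b w) c) = mu (rW w (c * b0)).

Lemma W_Frobenius_ext_of_rep : fgproj_right iota -> W_Frobenius_ext iota lW rW.
Proof.
move=> iota_fgp; split=> //.
have [iota_lin [iotaM iota1]] := iota_mor; have [phA_lin [phA_inj phA_onto]] := phA_frob.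
have /choice[Psi PsiE] : forall ax : A * A,
    exists w, forall c, mu (rW w c) = phA (ax.1 * ax.2 * iota c).
  move=> [a x]; apply: rep_onto => r u v /=.
  rewrite (klinD iota_lin) (klinZ iota_lin) mulrDr -scalerAr.
  by rewrite (klinD phA_lin) (klinZ phA_lin).
exists (fun a x => Psi (a, x)); split; [|split; [|split; [|split; [|split; [|split]]]]].
- move=> a x y; apply: rep_inj => c.
  by rewrite rW_add (klinD mu_lin) !PsiE mulrDr mulrDl (klinD phA_lin).
- move=> a x b; apply: rep_inj => c.
  by rewrite rWM !PsiE iotaM !mulrA.
- move=> a a' x; apply: rep_inj => c.
  by rewrite rW_add (klinD mu_lin) !PsiE !mulrDl (klinD phA_lin).
- move=> b a x; have [b0 hb0] := nuA_onto b; apply: rep_inj => c.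
  rewrite (lW_twist hb0) !PsiE iotaM [in RHS]mulrA [in RHS]phA_nak hb0.
  by rewrite !mulrA.
- by move=> a c x; apply: rep_inj => d; rewrite !PsiE !mulrA.
- move=> a a' aa'; apply: phA_inj => x.
  by have := PsiE (a, x) 1; rewrite aa' PsiE iota1 !mulr1.
- move=> f f_add f_rlin.
  have f_lin : klin (fun x => mu (f x)).
    move=> r u v; have -> : r *: u = u * iota r%:A.
      by rewrite (klinZ iota_lin) iota1 -scalerAr mulr1.
    by rewrite f_add f_rlin rWZ (klinD mu_lin) (klinZ mu_lin).
  have [a fa] := phA_onto _ f_lin.
  by exists a => x; apply: rep_inj => c; rewrite PsiE -f_rlin fa mulrA.
Qed.

End FrobeniusExtension.

Theorem theorem7p4 (k : comPzRingType) (P P' Q' : lmodType k)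
  (ev : Q' -> P' -> k^o) (A B : algType k) (iota : B -> A)
  (nuA : A -> A) (nuB : B -> B) (beta : B -> B)
  (W : lmodType k) (t : B -> Q' -> P -> W)
  (lW : B -> W -> W) (rW : W -> B -> W) :
  invertible_kmod P -> invertible_kmod P' ->
  (* Q' = P'^* *)
  is_dual ev ->
  P_Frobenius A P -> P_Frobenius B P' ->
  (* B is a subalgebra of A *)
  kalg_mor iota -> injective iota ->
  fgproj_right iota ->
  (* nuA is a Nakayama automorphism of A with nuA(B) = B *)
  nakayama_aut P nuA ->
  (forall b, exists b', nuA (iota b) = iota b') ->
  (forall b', exists b, nuA (iota b) = iota b') ->
  (* nuB is a Nakayama automorphism of B *)
  nakayama_aut P' nuB ->
  (* beta = nuB o nuA^{-1} on B *)
  (forall b c, iota c = nuA (iota b) -> beta c = nuB b) ->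
  (* W = _beta B (x)_k Q' (x)_k P with its B-bimodule structure *)
  is_tensor3 t ->
  (forall b, {morph lW b : x y / x + y}) ->
  (forall b, {morph rW ^~ b : x y / x + y}) ->
  (forall b x q p, lW b (t x q p) = t (beta b * x) q p) ->
  (forall b x q p, rW (t x q p) b = t (x * b) q p) ->
  W_Frobenius_ext iota lW rW.
Proof.
move=> _ P'_inv ev_dual _ [[n [e [g [e_lin [g_lin ge]]]]] _] iota_mor _ iota_fgp
  [phA [phA_frob [_ phA_nak]]] _ nuA_onto [phB [phB_frob [_ phB_nak]]] betaE
  t_tensor lW_add rW_add lWt rWt.
have [J J1] := dual_pairing_one ev_dual P'_inv.
have [X X_dual] := frob_hom_dual_elements phB_frob (fun i r u v => e_lin r u v i).
have [[mu [mu_lin muE]] _] := t_tensor.2 P _ (ev_phB_trilin P ev_dual phB_frob).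
have e_decomp := fgproj_decomp g_lin ge.
apply: (W_Frobenius_ext_of_rep iota_mor phA_frob phA_nak mu_lin rW_add
  (rWA t_tensor rW_add rWt) (rW_scale t_tensor rW_add rWt)
  (mu_rW_inj ev_dual P'_inv phB_frob t_tensor rW_add rWt mu_lin muE e_decomp X_dual J1)
  _ nuA_onto _ iota_fgp).
- move=> G G_lin; exists (W_of_hom t (fun i => g (fun j => (i == j)%:R)) X J G).
  exact: (mu_rW_W_of_hom ev_dual rW_add rWt mu_lin muE e_decomp X_dual J1).
- move=> b b0 hb0; apply: (mu_rW_lW t_tensor rW_add rWt mu_lin muE phB_nak lW_add lWt).
  by apply: betaE; rewrite hb0.
Qed.
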